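(* Fix $w\in(0,1]$, $b>0$ and $c\in\mathbb{R}$, and let $\delta(x;w,b,c)$ be the posterior median for the normal slab. Then $$\delta(x;w,b,c)-\frac{x/b^2+c}{1/b^2+1}\to0\quad\text{as }|x|\to+\infty.$$
   Context: Consider the model $X\mid\mu\sim N(\mu,1)$ with prior $\mu\sim(1-w)\delta_0+w\,\gamma(\cdot;b,c)$, where $\delta_0$ is the point mass at $0$, $w\in[0,1]$, and $\gamma(\mu;b,c)=\frac{b}{\sqrt{2\pi}}\exp\{-b^2(\mu-c)^2/2\}$ (the $N(c,1/b^2)$ density) with $b>0$, $c\in\mathbb{R}$. $\delta(x;w,b,c)$ denotes the median of the posterior distribution of $\mu$ given $X=x$. *)

From Stdlib Require Import Reals Lra.
Open Scope R_scope.

Definition phi (z : R) : R := exp (- (z ^ 2) / 2) / sqrt (2 * PI).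

Definition gam (b c mu : R) : R :=
  b / sqrt (2 * PI) * exp (- (b ^ 2 * (mu - c) ^ 2) / 2).

Definition lower_int (f : R -> R) (t I : R) : Prop :=
  forall eps, 0 < eps -> exists A, forall a, a <= A ->
    exists pr : Riemann_integrable f a t, Rabs (RiemannInt pr - I) < eps.

Definition upper_int (f : R -> R) (t I : R) : Prop :=
  forall eps, 0 < eps -> exists B, forall bb, B <= bb ->
    exists pr : Riemann_integrable f t bb, Rabs (RiemannInt pr - I) < eps.

Definition slab_joint (b c x : R) (mu : R) : R := phi (x - mu) * gam b c mu.

Definition ind {P : Prop} (p : {P} + {~ P}) : R := if p then 1 else 0.

(* m is a median of the posterior of mu given X = x, under the prior
   (1-w) delta_0 + w gamma(.; b, c), with X | mu ~ N(mu, 1):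
   P(mu <= m | x) >= 1/2 and P(mu >= m | x) >= 1/2, where by Bayes
   P(mu <= m | x) = ((1-w) phi(x) 1{0 <= m} + w int_{-oo}^m phi(x-mu) gam(mu) dmu) / marg,
   P(mu >= m | x) = ((1-w) phi(x) 1{0 >= m} + w int_m^{oo} phi(x-mu) gam(mu) dmu) / marg,
   marg = (1-w) phi(x) + w int_R phi(x-mu) gam(mu) dmu. *)
Definition is_posterior_median (w b c x m : R) : Prop :=
  exists L U L0 U0 : R,
    lower_int (slab_joint b c x) m L /\
    upper_int (slab_joint b c x) m U /\
    lower_int (slab_joint b c x) 0 L0 /\
    upper_int (slab_joint b c x) 0 U0 /\
    let marg := (1 - w) * phi x + w * (L0 + U0) in
    ((1 - w) * phi x * ind (Rle_dec 0 m) + w * L) / marg >= 1 / 2 /\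
    ((1 - w) * phi x * ind (Rle_dec m 0) + w * U) / marg >= 1 / 2.

From Pilot Require Import Defs.
From Stdlib Require Import Reals Lra Psatz.
From Coquelicot Require Import Coquelicot.
Open Scope R_scope.

(* Completing the square, the slab part of the joint density is a Gaussian in mu centred
   at the slab posterior mean M(x) = (x + b^2 c)/(1 + b^2), scaled by
   exp(-b^2 (x-c)^2 / (2(1+b^2))).  The spike weight phi(x) is smaller than this scale by a
   factor exp(-(x + b^2 c)^2/(2(1+b^2)) + O(1)) -> 0, so for |x| large the posterior mass of
   [M, M + eps] exceeds the whole atom at 0.  A median m >= M + eps would leave at most
   half the slab mass minus that amount above m, too little to reach 1/2 even with the
   atom.  Hence m < M + eps, and the reflection (x, c, mu) -> (-x, -c, -mu), which
   preserves the model, gives m > M - eps. *)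

Section ImproperIntegrals.

Variable f : R -> R.
Hypothesis f_int : forall a b, ex_RInt f a b.

Lemma upper_int_is_lim t U :
  upper_int f t U <-> is_lim (fun T => RInt f t T) p_infty U.
Proof.
  rewrite <- is_lim_spec; simpl; split.
  - intros H eps.
    destruct (H eps (cond_pos eps)) as [B HB]; exists B; intros T hT.
    destruct (HB T (Rlt_le _ _ hT)) as [pr Hpr].
    rewrite (RInt_Reals _ _ _ pr); exact Hpr.
  - intros H eps heps.
    destruct (H (mkposreal eps heps)) as [B HB]; exists (B + 1); intros T hT.
    exists (ex_RInt_Reals_0 _ _ _ (f_int t T)).
    rewrite <- RInt_Reals; apply HB; lra.
Qed.

Lemma lower_int_is_lim t L :
  lower_int f t L <-> is_lim (fun a => RInt f a t) m_infty L.
Proof.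
  rewrite <- is_lim_spec; simpl; split.
  - intros H eps.
    destruct (H eps (cond_pos eps)) as [A HA]; exists A; intros a ha.
    destruct (HA a (Rlt_le _ _ ha)) as [pr Hpr].
    rewrite (RInt_Reals _ _ _ pr); exact Hpr.
  - intros H eps heps.
    destruct (H (mkposreal eps heps)) as [A HA]; exists (A - 1); intros a ha.
    exists (ex_RInt_Reals_0 _ _ _ (f_int a t)).
    rewrite <- RInt_Reals; apply HA; lra.
Qed.

Lemma RInt_Chasles_R a b c : RInt f a b + RInt f b c = RInt f a c.
Proof. apply (RInt_Chasles f); apply f_int. Qed.

Lemma ex_RInt_comp_sub v a b : ex_RInt (fun y => f (v - y)) a b.
Proof.
  apply (ex_RInt_ext (fun y => scal (-1) (scal (-1) (f (-1 * y + v))))).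
  - intros y _; unfold scal; simpl; unfold mult; simpl.
    replace (-1 * y + v) with (v - y) by ring; ring.
  - apply (ex_RInt_scal (V := R_NormedModule)), (ex_RInt_comp_lin f), f_int.
Qed.

Lemma RInt_comp_sub v a b : RInt (fun y => f (v - y)) a b = RInt f (v - b) (v - a).
Proof.
  pose proof (RInt_comp_lin f (-1) v a b (f_int _ _)) as Hlin.
  pose proof (RInt_scal (fun y => f (v - y)) a b (-1) (ex_RInt_comp_sub v a b)) as Hscal.
  pose proof (opp_RInt_swap f (v - a) (v - b) (f_int _ _)) as Hswap.
  replace (-1 * a + v) with (v - a) in Hlin by ring.
  replace (-1 * b + v) with (v - b) in Hlin by ring.
  rewrite (RInt_ext _ (fun y => scal (-1) (f (v - y)))) in Hlin by
    (intros y _; replace (-1 * y + v) with (v - y) by ring; reflexivity).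
  unfold opp, scal, mult in *; simpl in *; unfold mult in *; simpl in *.
  rewrite <- Hswap, <- Hlin, Hscal; lra.
Qed.

Lemma is_lim_RInt_total t L U v :
  lower_int f t L -> upper_int f t U ->
  is_lim (fun T => RInt f (v - T) T) p_infty (L + U).
Proof.
  rewrite lower_int_is_lim, upper_int_is_lim; intros HL HU.
  apply (is_lim_ext (fun T => RInt f (v - T) t + RInt f t T));
    [intros T; apply RInt_Chasles_R|].
  apply is_lim_plus'; [|exact HU].
  apply (is_lim_comp (fun a => RInt f a t) (fun T => v - T) p_infty L m_infty HL).
  - apply is_lim_spec; intros N; exists (v - N); intros T hT; lra.
  - exists 0; intros; discriminate.
Qed.

End ImproperIntegrals.

Section Reflection.

Variables f g : R -> R.
Hypothesis f_int : forall a b, ex_RInt f a b.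
Hypothesis g_reflect : forall y, g y = f (- y).

Lemma RInt_reflect a b : RInt g a b = RInt f (- b) (- a).
Proof.
  rewrite (RInt_ext g (fun y => f (0 - y))) by
    (intros y _; rewrite g_reflect; f_equal; ring).
  rewrite RInt_comp_sub by exact f_int; f_equal; ring.
Qed.

Lemma ex_RInt_reflect a b : ex_RInt g a b.
Proof.
  apply (ex_RInt_ext (fun y => f (0 - y))).
  - intros y _; rewrite g_reflect; f_equal; ring.
  - apply ex_RInt_comp_sub, f_int.
Qed.

Lemma upper_int_reflect t L : lower_int f t L -> upper_int g (- t) L.
Proof.
  rewrite lower_int_is_lim, upper_int_is_lim by (exact f_int || exact ex_RInt_reflect).
  intros HL.
  apply (is_lim_ext (fun T => RInt f (- T) t)).
  { intros T; rewrite RInt_reflect, Ropp_involutive; reflexivity. }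
  apply (is_lim_comp (fun a => RInt f a t) Ropp p_infty L m_infty HL).
  - apply is_lim_spec; intros N; exists (- N); intros T hT; lra.
  - exists 0; intros; discriminate.
Qed.

Lemma lower_int_reflect t U : upper_int f t U -> lower_int g (- t) U.
Proof.
  rewrite upper_int_is_lim, lower_int_is_lim by (exact f_int || exact ex_RInt_reflect).
  intros HU.
  apply (is_lim_ext (fun a => RInt f t (- a))).
  { intros a; rewrite RInt_reflect, Ropp_involutive; reflexivity. }
  apply (is_lim_comp (fun T => RInt f t T) Ropp m_infty U p_infty HU).
  - apply is_lim_spec; intros N; exists (- N); intros a ha; lra.
  - exists 0; intros; discriminate.
Qed.

End Reflection.

Section SymmetricDensity.

Variables (f : R -> R) (M : R).
Hypothesis f_int : forall a b, ex_RInt f a b.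
Hypothesis f_nonneg : forall y, 0 <= f y.
Hypothesis f_sym : forall y, f (2 * M - y) = f y.

Lemma RInt_nonneg a b : a <= b -> 0 <= RInt f a b.
Proof. intros hab; apply RInt_ge_0; auto. Qed.

Lemma upper_int_nonneg t U : upper_int f t U -> 0 <= U.
Proof.
  rewrite upper_int_is_lim by exact f_int; intros HU.
  apply (is_lim_le_loc (fun _ => 0) (fun T => RInt f t T) p_infty 0 U);
    [| apply is_lim_const | exact HU].
  exists t; intros T hT; apply RInt_nonneg; lra.
Qed.

Lemma RInt_sym T : RInt f (2 * M - T) M = RInt f M T.
Proof.
  rewrite <- (RInt_ext (fun y => f (2 * M - y)) f) by (intros; apply f_sym).
  rewrite RInt_comp_sub by exact f_int; f_equal; ring.
Qed.

Lemma upper_tail_le_half_mass t L U m U' p :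
  lower_int f t L -> upper_int f t U -> upper_int f m U' -> p <= m ->
  2 * (RInt f M p + U') <= L + U.
Proof.
  intros HL HU HU' hpm.
  pose proof (is_lim_RInt_total f f_int t L U (2 * M) HL HU) as Htot.
  rewrite upper_int_is_lim in HU' by exact f_int.
  apply (is_lim_le_loc (fun T => 2 * (RInt f M p + RInt f m T))
    (fun T => RInt f (2 * M - T) T) p_infty (2 * (RInt f M p + U')) (L + U));
    [| | exact Htot].
  - exists m; intros T hT.
    rewrite <- (RInt_Chasles_R f f_int (2 * M - T) M T), RInt_sym,
      <- (RInt_Chasles_R f f_int M p T), <- (RInt_Chasles_R f f_int p m T).
    pose proof (RInt_nonneg p m hpm); lra.
  - apply (is_lim_scal_l _ 2 p_infty (RInt f M p + U')), is_lim_plus';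
      [apply is_lim_const | exact HU'].
Qed.

End SymmetricDensity.

Definition slab_post_mean (b c x : R) : R := (x / b ^ 2 + c) / (1 / b ^ 2 + 1).

Definition slab_weight (b c x : R) : R :=
  exp (- (b ^ 2 * (x - c) ^ 2) / (2 * (1 + b ^ 2))).

Lemma slab_joint_gauss b c x mu : 0 < b ->
  slab_joint b c x mu = b / (2 * PI) *
    exp (- ((1 + b ^ 2) * (mu - slab_post_mean b c x) ^ 2) / 2) * slab_weight b c x.
Proof.
  intros hb; unfold slab_joint, phi, gam, slab_weight.
  pose proof PI_RGT_0 as hpi.
  assert (hs : sqrt (2 * PI) * sqrt (2 * PI) = 2 * PI) by (apply sqrt_sqrt; lra).
  assert (hs0 : 0 < sqrt (2 * PI)) by (apply sqrt_lt_R0; lra).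
  replace (b / (2 * PI)) with (b / (sqrt (2 * PI) * sqrt (2 * PI))) by (rewrite hs; reflexivity).
  replace (exp (- (x - mu) ^ 2 / 2) / sqrt (2 * PI) *
    (b / sqrt (2 * PI) * exp (- (b ^ 2 * (mu - c) ^ 2) / 2)))
  with (b / (sqrt (2 * PI) * sqrt (2 * PI)) *
    (exp (- (x - mu) ^ 2 / 2) * exp (- (b ^ 2 * (mu - c) ^ 2) / 2))) by (field; lra).
  rewrite <- exp_plus, Rmult_assoc, <- exp_plus; do 2 f_equal; unfold slab_post_mean; field; nra.
Qed.

Lemma slab_joint_pos b c x mu : 0 < b -> 0 < slab_joint b c x mu.
Proof.
  intros hb; rewrite slab_joint_gauss by exact hb; pose proof PI_RGT_0.
  apply Rmult_lt_0_compat; [apply Rmult_lt_0_compat|]; try apply exp_pos.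
  apply Rdiv_lt_0_compat; lra.
Qed.

Lemma slab_joint_sym b c x (hb : 0 < b) y :
  slab_joint b c x (2 * slab_post_mean b c x - y) = slab_joint b c x y.
Proof.
  rewrite !slab_joint_gauss by exact hb; set (M := slab_post_mean b c x).
  replace ((2 * M - y - M) ^ 2) with ((y - M) ^ 2) by ring; reflexivity.
Qed.

Lemma ex_RInt_slab_joint b c x a a' : ex_RInt (slab_joint b c x) a a'.
Proof.
  apply (@ex_RInt_continuous R_CompleteNormedModule); intros z _.
  apply (@ex_derive_continuous R_AbsRing R_NormedModule).
  unfold slab_joint, phi, gam; auto_derive; auto.
Qed.

Lemma phi_pos x : 0 < phi x.
Proof.
  unfold phi; apply Rdiv_lt_0_compat; [apply exp_pos|].
  apply sqrt_lt_R0; pose proof PI_RGT_0; lra.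
Qed.

Lemma phi_opp x : phi (- x) = phi x.
Proof. unfold phi; replace ((- x) ^ 2) with (x ^ 2) by ring; reflexivity. Qed.

Lemma slab_joint_opp b c x y : slab_joint b (- c) (- x) y = slab_joint b c x (- y).
Proof.
  unfold slab_joint, phi, gam.
  replace ((- x - y) ^ 2) with ((x - - y) ^ 2) by ring.
  replace ((y - - c) ^ 2) with ((- y - c) ^ 2) by ring; reflexivity.
Qed.

Lemma slab_post_mean_opp b c x : slab_post_mean b (- c) (- x) = - slab_post_mean b c x.
Proof. unfold slab_post_mean, Rdiv; ring. Qed.

Lemma slab_weight_opp b c x : slab_weight b (- c) (- x) = slab_weight b c x.
Proof. unfold slab_weight; replace ((- x - - c) ^ 2) with ((x - c) ^ 2) by ring; reflexivity. Qed.

Lemma ind_Rle_opp m : Defs.ind (Rle_dec 0 (- m)) = Defs.ind (Rle_dec m 0).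
Proof. unfold Defs.ind; destruct (Rle_dec 0 (- m)), (Rle_dec m 0); lra. Qed.

Lemma posterior_median_opp w b c x m :
  is_posterior_median w b c x m -> is_posterior_median w b (- c) (- x) (- m).
Proof.
  intros [L [U [L0 [U0 [HL [HU [HL0 [HU0 [Hle Hge]]]]]]]]].
  pose proof (slab_joint_opp b c x) as Hrefl.
  pose proof (ex_RInt_slab_joint b c x) as Hint.
  exists U, L, U0, L0; repeat split.
  - exact (lower_int_reflect _ _ Hint Hrefl m U HU).
  - exact (upper_int_reflect _ _ Hint Hrefl m L HL).
  - rewrite <- Ropp_0; exact (lower_int_reflect _ _ Hint Hrefl 0 U0 HU0).
  - rewrite <- Ropp_0; exact (upper_int_reflect _ _ Hint Hrefl 0 L0 HL0).
  - cbv zeta; rewrite phi_opp, ind_Rle_opp, (Rplus_comm U0); exact Hge.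
  - cbv zeta; rewrite phi_opp, <- (ind_Rle_opp (- m)), Ropp_involutive, (Rplus_comm U0).
    exact Hle.
Qed.

Lemma RInt_slab_joint_ge b c x e : 0 < b -> 0 <= e ->
  e * (b / (2 * PI) * exp (- ((1 + b ^ 2) * e ^ 2) / 2)) * slab_weight b c x
  <= RInt (slab_joint b c x) (slab_post_mean b c x) (slab_post_mean b c x + e).
Proof.
  intros hb he; set (M := slab_post_mean b c x).
  pose proof PI_RGT_0.
  replace (e * (b / (2 * PI) * exp (- ((1 + b ^ 2) * e ^ 2) / 2)) * slab_weight b c x)
    with (RInt (fun _ => b / (2 * PI) * exp (- ((1 + b ^ 2) * e ^ 2) / 2) * slab_weight b c x)
      M (M + e))
    by (rewrite RInt_const; unfold scal; simpl; unfold mult; simpl; ring).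
  apply RInt_le; [lra | apply ex_RInt_const | apply ex_RInt_slab_joint |].
  intros y hy; rewrite slab_joint_gauss by exact hb; fold M.
  apply Rmult_le_compat_r; [left; apply exp_pos|].
  apply Rmult_le_compat_l; [left; apply Rdiv_lt_0_compat; lra|].
  left; apply exp_increasing.
  assert ((y - M) ^ 2 < e ^ 2) by nra.
  nra.
Qed.

Lemma posterior_median_lt_post_mean_add w b c x m e :
  0 < w <= 1 -> 0 < b -> is_posterior_median w b c x m ->
  phi x <= w * RInt (slab_joint b c x) (slab_post_mean b c x) (slab_post_mean b c x + e) ->
  m < slab_post_mean b c x + e.
Proof.
  intros hw hb [L [U [L0 [U0 [_ [HU [HL0 [HU0 [_ Hge]]]]]]]]] Hmass.
  set (M := slab_post_mean b c x) in *; set (I := RInt (slab_joint b c x) M (M + e) : R) in *.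
  destruct (Rlt_or_le m (M + e)) as [Hlt | Hle]; [exact Hlt | exfalso].
  pose proof (ex_RInt_slab_joint b c x) as Hint.
  assert (Hpos : forall y, 0 <= slab_joint b c x y) by (intros; left; apply slab_joint_pos, hb).
  pose proof (upper_tail_le_half_mass _ M Hint Hpos (slab_joint_sym b c x hb) 0 L0 U0 m U (M + e)
    HL0 HU0 HU Hle) as Htail; fold I in Htail.
  pose proof (upper_int_nonneg _ Hint Hpos m U HU) as HU_nonneg.
  pose proof (phi_pos x) as hphi.
  set (marg := (1 - w) * phi x + w * (L0 + U0)) in Hge.
  set (upper := (1 - w) * phi x * Defs.ind (Rle_dec m 0) + w * U) in Hge.
  assert (Hind : 0 <= Defs.ind (Rle_dec m 0) <= 1)
    by (unfold Defs.ind; destruct (Rle_dec m 0); lra).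
  assert (Hslab : 2 * phi x + 2 * (w * U) <= w * (L0 + U0)).
  { assert (w * (2 * (I + U)) <= w * (L0 + U0)) by (apply Rmult_le_compat_l; lra).
    lra. }
  assert (HwU : 0 <= w * U) by nra.
  assert (Hpoint : 0 <= (1 - w) * phi x) by nra.
  assert (Hmarg : 0 < marg) by (unfold marg; lra).
  assert (Hhalf : marg <= 2 * upper).
  { replace upper with (upper / marg * marg) by (field; lra).
    apply Rge_le in Hge; nra. }
  assert ((1 - w) * phi x * Defs.ind (Rle_dec m 0) <= (1 - w) * phi x) by nra.
  unfold marg, upper in Hhalf; nra.
Qed.

Lemma phi_le_slab_weight_eventually b c C : 0 < C ->
  exists K, forall x, K < Rabs x -> phi x <= C * slab_weight b c x.
Proof.
  intros hC.
  set (D := 2 * (1 + b ^ 2) * (Rabs (ln C) + b ^ 2 * c ^ 2 / 2)).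
  assert (hb2 : 0 <= b ^ 2) by nra.
  assert (hD : 0 <= D) by (unfold D; pose proof (Rabs_pos (ln C)); nra).
  exists (Rabs (b ^ 2 * c) + sqrt D); intros x hx.
  assert (Hshift : D < (x + b ^ 2 * c) ^ 2).
  { pose proof (Rabs_triang_inv x (- (b ^ 2 * c))) as Htri.
    rewrite Rabs_Ropp in Htri; replace (x - - (b ^ 2 * c)) with (x + b ^ 2 * c) in Htri by ring.
    rewrite <- pow2_abs, <- (sqrt_sqrt D hD).
    pose proof (sqrt_pos D); nra. }
  assert (Hexp : - x ^ 2 / 2 < ln C + - (b ^ 2 * (x - c) ^ 2) / (2 * (1 + b ^ 2))).
  { assert (Hquad : x ^ 2 / 2 - b ^ 2 * (x - c) ^ 2 / (2 * (1 + b ^ 2))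
        = (x + b ^ 2 * c) ^ 2 / (2 * (1 + b ^ 2)) - b ^ 2 * c ^ 2 / 2)
      by (field; lra).
    assert (D / (2 * (1 + b ^ 2)) < (x + b ^ 2 * c) ^ 2 / (2 * (1 + b ^ 2)))
      by (apply Rmult_lt_compat_r; [apply Rinv_0_lt_compat; lra | exact Hshift]).
    replace (D / (2 * (1 + b ^ 2))) with (Rabs (ln C) + b ^ 2 * c ^ 2 / 2) in *
      by (unfold D; field; lra).
    pose proof (Rle_abs (- ln C)); rewrite Rabs_Ropp in *.
    unfold Rdiv in *; lra. }
  assert (Hsqrt : 1 <= sqrt (2 * PI)).
  { rewrite <- sqrt_1; apply sqrt_le_1_alt; pose proof PI2_3_2; lra. }
  unfold phi, slab_weight.
  rewrite <- (exp_ln C hC), <- exp_plus.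
  apply (Rle_trans _ (exp (- x ^ 2 / 2))).
  - apply Rmult_le_reg_r with (sqrt (2 * PI)); [lra|].
    unfold Rdiv; rewrite Rmult_assoc, Rinv_l by lra.
    pose proof (exp_pos (- x ^ 2 / 2)); nra.
  - left; apply exp_increasing, Hexp.
Qed.

Theorem mainTheorem4 (w b c : R) (hw : 0 < w <= 1) (hb : 0 < b)
  (delta : R -> R)
  (hdelta : forall x : R, is_posterior_median w b c x (delta x)) :
  forall eps : R, 0 < eps -> exists K : R, forall x : R, K < Rabs x ->
    Rabs (delta x - (x / b ^ 2 + c) / (1 / b ^ 2 + 1)) < eps.
Proof.
  intros eps heps.
  set (C := w * (eps * (b / (2 * PI) * exp (- ((1 + b ^ 2) * eps ^ 2) / 2)))).
  assert (hC : 0 < C).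
  { pose proof PI_RGT_0; pose proof (exp_pos (- ((1 + b ^ 2) * eps ^ 2) / 2)).
    unfold C; apply Rmult_lt_0_compat; [lra|].
    apply Rmult_lt_0_compat; [lra|]; apply Rmult_lt_0_compat; [apply Rdiv_lt_0_compat|]; lra. }
  assert (Hmass : forall c x, phi x <= C * slab_weight b c x ->
    phi x <= w * RInt (slab_joint b c x) (slab_post_mean b c x) (slab_post_mean b c x + eps)).
  { intros c' x' Hphi; apply (Rle_trans _ _ _ Hphi); unfold C; rewrite Rmult_assoc.
    apply Rmult_le_compat_l; [lra|]; apply RInt_slab_joint_ge; lra. }
  destruct (phi_le_slab_weight_eventually b c C hC) as [K HK].
  exists K; intros x hx.
  change ((x / b ^ 2 + c) / (1 / b ^ 2 + 1)) with (slab_post_mean b c x).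
  assert (Hup : delta x < slab_post_mean b c x + eps)
    by exact (posterior_median_lt_post_mean_add w b c x (delta x) eps hw hb (hdelta x)
      (Hmass c x (HK x hx))).
  assert (Hdown : - delta x < slab_post_mean b (- c) (- x) + eps).
  { apply (posterior_median_lt_post_mean_add w b (- c) (- x) (- delta x) eps hw hb
      (posterior_median_opp _ _ _ _ _ (hdelta x))).
    apply Hmass; rewrite phi_opp, slab_weight_opp; apply HK, hx. }
  rewrite slab_post_mean_opp in Hdown.
  apply Rabs_def1; lra.
Qed.
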